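(* Let $\mathcal{A}$ be a finite abelian group with $|\mathcal{A}|\ge 3$. Let $M_5(p_1,p_2)$ be the graph consisting of the $5$-cycle $v_1v_2v_3v_4v_5v_1$ with the chord $v_3v_5$, together with $p_1\ge 0$ pendant vertices adjacent to $v_1$ and $p_2\ge0$ pendant vertices adjacent to $v_2$, where $(p_1,p_2)\neq(0,0)$. Then $M_5(p_1,p_2)$ is $\mathcal{A}$-vertex magic if and only if $p_1\ge1$, $p_2\ge 1$, and $\mathcal{A}$ contains a square element.
   Context: An element $g\in\mathcal{A}$ is a square if $g\neq 0$ and $g=2h$ for some $h\in\mathcal{A}$. A map $\ell:V(G)\to\mathcal{A}\setminus\{0\}$ is an $\mathcal{A}$-vertex magic labeling if there is $\mu\in\mathcal{A}$ with $\sum_{u\in N(v)}\ell(u)=\mu$ for every vertex $v$; $G$ is $\mathcal{A}$-vertex magic if such a labeling exists. A pendant vertex has degree $1$. *)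

From mathcomp Require Import all_boot all_order all_algebra.
Set Implicit Arguments. Unset Strict Implicit. Unset Printing Implicit Defensive.
Import GRing.Theory.
Local Open Scope ring_scope.

Definition is_square (A : zmodType) (g : A) : Prop :=
  g != 0 /\ exists h : A, g = h *+ 2.

Definition vertex_magic_labeling (A : zmodType) (V : finType) (adj : rel V)
    (l : V -> A) : Prop :=
  (forall v, l v != 0) /\
  exists mu : A, forall v : V, \sum_(u | adj v u) l u = mu.

Definition vertex_magic (A : zmodType) (V : finType) (adj : rel V) : Prop :=
  exists l : V -> A, vertex_magic_labeling adj l.

(* The graph M_5(p1,p2).  Vertices: inl i (i : 'I_5) is v_{i+1};
   inr (inl k) are the p1 pendant vertices attached to v_1;
   inr (inr k) are the p2 pendant vertices attached to v_2. *)
Definition M5V (p1 p2 : nat) : finType := ('I_5 + ('I_p1 + 'I_p2))%type.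

Definition core_adj (i j : 'I_5) : bool :=
  ((i.+1 %% 5)%N == j) || ((j.+1 %% 5)%N == i)
  || ((i == 2 :> nat) && (j == 4 :> nat)) || ((i == 4 :> nat) && (j == 2 :> nat)).

Definition M5adj (p1 p2 : nat) : rel (M5V p1 p2) :=
  fun x y =>
    match x, y with
    | inl i, inl j => core_adj i j
    | inl i, inr (inl _) => i == 0 :> nat
    | inr (inl _), inl j => j == 0 :> nat
    | inl i, inr (inr _) => i == 1 :> nat
    | inr (inr _), inl j => j == 1 :> nat
    | inr _, inr _ => false
    end.

From mathcomp Require Import all_boot all_order all_algebra.
From mathcomp Require Import zify.
Set Implicit Arguments.
Unset Strict Implicit.
Unset Printing Implicit Defensive.
Local Open Scope ring_scope.
Import GRing.Theory.

(* A pendant vertex forces the magic constant mu to be the label of its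
   neighbour.  If v2 carries pendants but v1 does not, the equation at v1 reads
   l(v2) + l(v5) = mu = l(v2), so l(v5) = 0; symmetrically for v1.  When both
   carry pendants, mu = l(v1) = l(v2), the equations at v3 and v5 give
   l(v3) = l(v5) = -l(v4), and the equation at v4 becomes mu = 2 l(v5).
   Conversely, for g = 2h <> 0, label v1, v2 by g, v3 and v5 by h, v4 by -h,
   and split -h into nonzero labels of the pendants at v1 (resp. v2); when
   |A| >= 3 such splittings into any positive number of nonzero summands exist,
   since some y differs from both 0 and x, and x = y + (x - y). *)

Lemma exists_nonzero_neq (A : finZmodType) (x : A) :
  (2 < #|A|)%N -> exists2 y : A, y != 0 & y != x.
Proof.
rewrite -(cardC [set 0; x]) cards2 => A_gt2.
have /card_gt0P[y] : (0 < #|[predC [set 0%R; x]]|)%N.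
  by move: A_gt2; case: (_ != _) => /=; lia.
by rewrite !inE negb_or => /andP[]; exists y.
Qed.

Lemma nonzero_sum_decomposition (A : finZmodType) (n : nat) (x : A) :
  (2 < #|A|)%N -> (0 < n)%N -> x != 0 ->
  exists2 f : 'I_n -> A, (forall k, f k != 0) & \sum_k f k = x.
Proof.
move=> A_gt2; case: n => // n _; elim: n x => [|n IHn] x x_neq0.
  by exists (fun=> x) => //; rewrite big_ord1.
have [y y_neq0 y_neq_x] := exists_nonzero_neq x A_gt2.
have [|f f_neq0 sum_f] := IHn (x - y); first by rewrite subr_eq0 eq_sym.
exists (fun k => oapp f y (unlift ord0 k)).
  by move=> k; case: (unlift ord0 k) => /=.
rewrite big_ord_recl unlift_none /=.
by under eq_bigr do rewrite liftK /=; rewrite sum_f addrC subrK.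
Qed.

Lemma sum_ord_neq0_gt0 (A : zmodType) (n : nat) (F : 'I_n -> A) :
  \sum_k F k != 0 -> (0 < n)%N.
Proof. by case: n F => // F; rewrite big_ord0 eqxx. Qed.

Lemma addrI0 (A : zmodType) (x y : A) : x + y = x -> y = 0.
Proof. by rewrite -[RHS]addr0 => /addrI. Qed.

Definition v1 {p1 p2 : nat} : M5V p1 p2 := inl (@Ordinal 5 0 isT).
Definition v2 {p1 p2 : nat} : M5V p1 p2 := inl (@Ordinal 5 1 isT).
Definition v3 {p1 p2 : nat} : M5V p1 p2 := inl (@Ordinal 5 2 isT).
Definition v4 {p1 p2 : nat} : M5V p1 p2 := inl (@Ordinal 5 3 isT).
Definition v5 {p1 p2 : nat} : M5V p1 p2 := inl (@Ordinal 5 4 isT).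
Definition pendant1 {p1 p2 : nat} (k : 'I_p1) : M5V p1 p2 := inr (inl k).
Definition pendant2 {p1 p2 : nat} (k : 'I_p2) : M5V p1 p2 := inr (inr k).

Lemma M5V_ind (p1 p2 : nat) (P : M5V p1 p2 -> Prop) :
  P v1 -> P v2 -> P v3 -> P v4 -> P v5 ->
  (forall k, P (pendant1 k)) -> (forall k, P (pendant2 k)) -> forall v, P v.
Proof.
move=> P1 P2 P3 P4 P5 Pp1 Pp2.
case=> [[i lt_i5]|[k|k]]; [|exact: Pp1|exact: Pp2].
by case: i lt_i5 => [|[|[|[|[|n]]]]] lt_i5 //; rewrite (bool_irrelevance lt_i5 isT).
Qed.

Lemma big_ord5 (A : zmodType) (F : 'I_5 -> A) :
  \sum_i F i = F (@Ordinal 5 0 isT) + F (@Ordinal 5 1 isT)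
    + F (@Ordinal 5 2 isT) + F (@Ordinal 5 3 isT) + F (@Ordinal 5 4 isT).
Proof.
rewrite !big_ord_recl big_ord0 addr0 !addrA.
by congr (_ + _ + _ + _ + _); congr F; apply: val_inj.
Qed.

Ltac nbr_sum_simpl :=
  rewrite big_sumType /= big_sumType /= big_mkcond big_ord5 /=
    ?big_pred0_eq ?addr0 ?add0r.

Section M5NeighbourhoodSums.
Variables (A : zmodType) (p1 p2 : nat) (l : M5V p1 p2 -> A).
Local Notation nbr_sum v := (\sum_(u | M5adj v u) l u).

Lemma nbr_sum_v1 : nbr_sum v1 = l v2 + l v5 + \sum_k l (pendant1 k).
Proof. by nbr_sum_simpl. Qed.

Lemma nbr_sum_v2 : nbr_sum v2 = l v1 + l v3 + \sum_k l (pendant2 k).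
Proof. by nbr_sum_simpl. Qed.

Lemma nbr_sum_v3 : nbr_sum v3 = l v2 + l v4 + l v5.
Proof. by nbr_sum_simpl. Qed.

Lemma nbr_sum_v4 : nbr_sum v4 = l v3 + l v5.
Proof. by nbr_sum_simpl. Qed.

Lemma nbr_sum_v5 : nbr_sum v5 = l v1 + l v3 + l v4.
Proof. by nbr_sum_simpl. Qed.

Lemma nbr_sum_pendant1 k : nbr_sum (pendant1 k) = l v1.
Proof. by nbr_sum_simpl. Qed.

Lemma nbr_sum_pendant2 k : nbr_sum (pendant2 k) = l v2.
Proof. by nbr_sum_simpl. Qed.

End M5NeighbourhoodSums.

Section M5MagicNecessity.
Variables (A : zmodType) (p1 p2 : nat) (l : M5V p1 p2 -> A) (mu : A).
Hypothesis l_neq0 : forall v, l v != 0.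
Hypothesis l_magic : forall v, \sum_(u | M5adj v u) l u = mu.

Lemma M5_magic_v1 (k : 'I_p1) : l v1 = mu.
Proof. by rewrite -(l_magic (pendant1 k)) nbr_sum_pendant1. Qed.

Lemma M5_magic_v2 (k : 'I_p2) : l v2 = mu.
Proof. by rewrite -(l_magic (pendant2 k)) nbr_sum_pendant2. Qed.

Lemma M5_magic_pendants1 : (0 < p2)%N -> (0 < p1)%N.
Proof.
move=> p2_gt0; apply: (sum_ord_neq0_gt0 (F := l \o pendant1)).
have : l v2 + (l v5 + \sum_k l (pendant1 k)) = l v2.
  by rewrite addrA -nbr_sum_v1 l_magic (M5_magic_v2 (Ordinal p2_gt0)).
by move/addrI0/eqP; rewrite addrC addr_eq0 => /eqP->; rewrite oppr_eq0.
Qed.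

Lemma M5_magic_pendants2 : (0 < p1)%N -> (0 < p2)%N.
Proof.
move=> p1_gt0; apply: (sum_ord_neq0_gt0 (F := l \o pendant2)).
have : l v1 + (l v3 + \sum_k l (pendant2 k)) = l v1.
  by rewrite addrA -nbr_sum_v2 l_magic (M5_magic_v1 (Ordinal p1_gt0)).
by move/addrI0/eqP; rewrite addrC addr_eq0 => /eqP->; rewrite oppr_eq0.
Qed.

Lemma M5_magic_square : (0 < p1)%N -> (0 < p2)%N -> is_square mu.
Proof.
move=> p1_gt0 p2_gt0.
have mu_v1 := M5_magic_v1 (Ordinal p1_gt0).
have mu_v2 := M5_magic_v2 (Ordinal p2_gt0).
have l_v4 : l v4 = - l v5.
  apply/eqP; rewrite -addr_eq0; apply/eqP/(addrI0 (x := l v2)).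
  by rewrite addrA -nbr_sum_v3 l_magic mu_v2.
have l_v3 : l v3 = l v5.
  apply/eqP; rewrite -[l v5]opprK -l_v4 -addr_eq0; apply/eqP/(addrI0 (x := l v1)).
  by rewrite addrA -nbr_sum_v5 l_magic mu_v1.
split; first by rewrite -mu_v1.
by exists (l v5); rewrite -(l_magic v4) nbr_sum_v4 l_v3.
Qed.

End M5MagicNecessity.

Section M5MagicLabeling.
Variables (A : zmodType) (p1 p2 : nat) (h : A) (f1 : 'I_p1 -> A) (f2 : 'I_p2 -> A).

Definition M5_label (v : M5V p1 p2) : A :=
  match v with
  | inl i => [:: h *+ 2; h *+ 2; h; - h; h]`_i
  | inr (inl k) => f1 k
  | inr (inr k) => f2 k
  end.

Lemma M5_label_neq0 :
  h *+ 2 != 0 -> (forall k, f1 k != 0) -> (forall k, f2 k != 0) ->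
  forall v, M5_label v != 0.
Proof.
move=> h2_neq0 f1_neq0 f2_neq0.
have h_neq0 : h != 0 by apply: contraNneq h2_neq0 => ->; rewrite mul0rn.
by apply: M5V_ind; rewrite //= oppr_eq0.
Qed.

Lemma M5_label_magic :
  \sum_k f1 k = - h -> \sum_k f2 k = - h ->
  forall v, \sum_(u | M5adj v u) M5_label u = h *+ 2.
Proof.
move=> sum_f1 sum_f2; apply: M5V_ind.
- by rewrite nbr_sum_v1 /= sum_f1 addrK.
- by rewrite nbr_sum_v2 /= sum_f2 addrK.
- by rewrite nbr_sum_v3 /= subrK.
- by rewrite nbr_sum_v4 /= mulr2n.
- by rewrite nbr_sum_v5 /= addrK.
- by move=> k; rewrite nbr_sum_pendant1.
- by move=> k; rewrite nbr_sum_pendant2.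
Qed.

End M5MagicLabeling.

Lemma M5_vertex_magic_of_square (A : finZmodType) (p1 p2 : nat) (g : A) :
  (2 < #|A|)%N -> (0 < p1)%N -> (0 < p2)%N -> is_square g ->
  vertex_magic A (@M5adj p1 p2).
Proof.
move=> A_gt2 p1_gt0 p2_gt0 [h2_neq0 [h g_def]]; subst g.
have Nh_neq0 : - h != 0.
  by rewrite oppr_eq0; apply: contraNneq h2_neq0 => ->; rewrite mul0rn.
have [f1 f1_neq0 sum_f1] := nonzero_sum_decomposition A_gt2 p1_gt0 Nh_neq0.
have [f2 f2_neq0 sum_f2] := nonzero_sum_decomposition A_gt2 p2_gt0 Nh_neq0.
exists (M5_label h f1 f2); split; first exact: M5_label_neq0.
by exists (h *+ 2); apply: M5_label_magic.
Qed.

Theorem proposition4p5 (A : finZmodType) (p1 p2 : nat) :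
  (3 <= #|A|)%N -> (p1, p2) <> (0%N, 0%N) ->
  (vertex_magic A (@M5adj p1 p2) <->
   [/\ (1 <= p1)%N, (1 <= p2)%N & exists g : A, is_square g]).
Proof.
move=> A_gt2 p_neq0; split=> [[l [l_neq0 [mu l_magic]]] | [p1_gt0 p2_gt0 [g g_sq]]].
- have p_gt0 : (0 < p1)%N || (0 < p2)%N.
    by rewrite !lt0n -negb_and; apply: contra_notN p_neq0 => /andP[/eqP-> /eqP->].
  have p1_gt0 : (0 < p1)%N.
    by case/orP: p_gt0 => // /(M5_magic_pendants1 l_neq0 l_magic).
  have p2_gt0 := M5_magic_pendants2 l_neq0 l_magic p1_gt0.
  by split=> //; exists mu; apply: M5_magic_square l_neq0 l_magic p1_gt0 p2_gt0.
- exact: M5_vertex_magic_of_square A_gt2 p1_gt0 p2_gt0 g_sq.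
Qed.
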